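(* Let $G$ be the two-player game with $A_i=\{a_{i1},a_{i2},a_{i3}\}$ and fitness vectors (row $a_{1r}$, column $a_{2c}$): row 1: $(4,4),(2,2),(0,5)$; row 2: $(2,2),(4,4),(0,0)$; row 3: $(5,0),(0,0),(2,2)$. Let $\mu=\delta_{\theta_1}\times\delta_{\theta_2}$ where $\theta_1=\theta_2=\theta\in\mathbb{R}^A$ with $\theta(a_{11},a_{21})=\theta(a_{12},a_{22})=2$, $\theta(a_{11},a_{22})=\theta(a_{12},a_{21})=1$, and $\theta(a)=0$ for all other $a\in A$. Let $s_1(\theta_1)=s_2(\theta_2)=(1/2,1/2,0)$. Then $s$ is a Bayesian–Nash equilibrium of the no-observability game with distribution $\mu$, and the configuration $(\mu,s)$ is stable under no observability.
   Context: Preference types: $\Theta=\mathbb{R}^A$, $A=A_1\times A_2$ (utility functions on $A$, extended bilinearly to mixed profiles); $\pi_i$ likewise extended. $\mathcal{M}(\Theta^2)$: product distributions $\mu=\mu_1\times\mu_2$ with finitely supported marginals; $\mu_{-i}=\mu_j$ ($j\neq i$). Mutants: for nonempty $J\subseteq\{1,2\}$, a mutant sub-profile is $\tilde\theta_J\in\prod_{j\in J}(\Theta\setminus\operatorname{supp}\mu_j)$ with shares $\varepsilon\in(0,1)^{|J|}$, $\|\varepsilon\|=\max_j\varepsilon_j$; post-entry $\tilde\mu^\varepsilon_i=(1-\varepsilon_i)\mu_i+\varepsilon_i\delta_{\tilde\theta_i}$ for $i\in J$, $\tilde\mu^\varepsilon_i=\mu_i$ otherwise. No observability: a strategy of player $i$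 is $s_i:\operatorname{supp}\mu_i\to\Delta(A_i)$; $s$ is a Bayesian–Nash equilibrium if for each $i$ and $\theta_i\in\operatorname{supp}\mu_i$, $s_i(\theta_i)\in\arg\max_{\sigma_i\in\Delta(A_i)}\sum_{\theta'_{-i}}\mu_{-i}(\theta'_{-i})\theta_i(\sigma_i,s_{-i}(\theta'_{-i}))$; $B_0(\mu)$ is the set of these; $(\mu,s)$ is a configuration, with aggregate outcome $x(\mu,s)=\big(\sum_{\theta_i}\mu_i(\theta_i)s_i(\theta_i)\big)_{i}$. Average fitness: $\Pi_{\theta_i}(\mu;s)=\pi_i(s_i(\theta_i),x(\mu,s)_{-i})$. Balanced: all types in each $\operatorname{supp}\mu_i$ have equal average fitness. Nearby set: for $\eta\ge0$, $B_0^\eta(\tilde\mu^\varepsilon;s)=\{\tilde s\in B_0(\tilde\mu^\varepsilon):\max_{i}\|\tilde s_i(\theta_i)-s_i(\theta_i)\|\le\eta\ \forall\theta\in\operatorname{supp}\mu\}$ (Euclidean norm). $(\mu,s)$ is stable if it is balanced and for every nonempty $J$, every $\tilde\theta_J$ and every $\eta>0$ there exist $\bar\eta\in[0,\eta)$ and $\bar\epsilon\in(0,1)$ such that for every $\varepsilon$ with $\|\varepsilon\|\in(0,\bar\epsilon)$, $B_0^{\bar\eta}(\tilde\mu^\varepsilon;s)\neq\emptyset$ and every $\tilde s\in B_0^{\bar\eta}(\tilde\mu^\varepsilon;s)$ satisfies either (i) some $j\in J$ has $\Pi_{\theta_j}(\tilde\mu^\varepsilon;\tilde s)>\Pi_{\tilde\theta_j}(\tilde\mu^\varepsilon;\tilde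 s)$ for all $\theta_j\in\operatorname{supp}\mu_j$, or (ii) for every $i$ all types in $\operatorname{supp}\tilde\mu^\varepsilon_i$ have equal average fitness under $(\tilde\mu^\varepsilon,\tilde s)$. *)

From Stdlib Require Import Reals List.
Import ListNotations.
Open Scope R_scope.

(* Each player has three actions a_{i1}, a_{i2}, a_{i3}. *)
Inductive act := x1 | x2 | x3.
Inductive player := P1 | P2.

Definition other (i : player) : player := match i with P1 => P2 | P2 => P1 end.

(* Theta = R^A, A = A1 x A2; first argument is player 1's action. *)
Definition Theta := act -> act -> R.
Definition mixed := act -> R.

Definition sum_act (f : act -> R) : R := f x1 + f x2 + f x3.

Definition is_mixed (sg : mixed) : Prop :=
  (forall a, 0 <= sg a) /\ sum_act sg = 1.

Definition U (u : Theta) (s1 s2 : mixed) : R :=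
  sum_act (fun a => sum_act (fun b => s1 a * s2 b * u a b)).

Definition payoff (i : player) (u : Theta) (own oth : mixed) : R :=
  match i with P1 => U u own oth | P2 => U u oth own end.

(* A finitely supported distribution on Theta, as a list of atoms
   (type, probability). *)
Definition dist := list (Theta * R).
Definition supp (m : dist) : list Theta := map fst m.

Definition wf_dist (m : dist) : Prop :=
  NoDup (supp m) /\ Forall (fun p => 0 < snd p) m /\
  fold_right (fun p acc => snd p + acc) 0 m = 1.

(* product distribution mu = mu_1 x mu_2, given by its marginals *)
Definition profile_dist := player -> dist.
(* strategies s_i : Theta -> Delta(A_i) (only values on supp mu_i matter) *)
Definition strat := player -> Theta -> mixed.

Definition dsum (m : dist) (f : Theta -> R) : R :=
  fold_right (fun p acc => snd p * f (fst p) + acc) 0 m.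

Definition bne (mu : profile_dist) (s : strat) : Prop :=
  forall i th, In th (supp (mu i)) ->
    is_mixed (s i th) /\
    forall sg, is_mixed sg ->
      dsum (mu (other i)) (fun th' => payoff i th sg (s (other i) th'))
      <= dsum (mu (other i)) (fun th' => payoff i th (s i th) (s (other i) th')).

Definition aggr (mu : profile_dist) (s : strat) (i : player) : mixed :=
  fun a => dsum (mu i) (fun th => s i th a).

Definition pi1 : Theta := fun r c =>
  match r, c with
  | x1, x1 => 4 | x1, x2 => 2 | x1, x3 => 0
  | x2, x1 => 2 | x2, x2 => 4 | x2, x3 => 0
  | x3, x1 => 5 | x3, x2 => 0 | x3, x3 => 2
  end.
Definition pi2 : Theta := fun r c =>
  match r, c with
  | x1, x1 => 4 | x1, x2 => 2 | x1, x3 => 5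
  | x2, x1 => 2 | x2, x2 => 4 | x2, x3 => 0
  | x3, x1 => 0 | x3, x2 => 0 | x3, x3 => 2
  end.
Definition fit (i : player) : Theta := match i with P1 => pi1 | P2 => pi2 end.

Definition avgfit (mu : profile_dist) (s : strat) (i : player) (th : Theta) : R :=
  payoff i (fit i) (s i th) (aggr mu s (other i)).

Definition balanced (mu : profile_dist) (s : strat) : Prop :=
  forall i th th', In th (supp (mu i)) -> In th' (supp (mu i)) ->
    avgfit mu s i th = avgfit mu s i th'.

(* Mutant entry: J : player -> bool encodes J, tt i the mutant type of
   i in J, eps i its share. *)
Definition post (J : player -> bool) (tt : player -> Theta) (eps : player -> R)
  (mu : profile_dist) : profile_dist :=
  fun i => if J i then (tt i, eps i) :: map (fun p => (fst p, (1 - eps i) * snd p)) (mu i)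
           else mu i.

Definition normJ (J : player -> bool) (eps : player -> R) : R :=
  Rmax (if J P1 then eps P1 else 0) (if J P2 then eps P2 else 0).

Definition enorm (v : mixed) : R := sqrt (sum_act (fun a => v a * v a)).

Definition nearby (mu mu' : profile_dist) (s : strat) (eta : R) (st : strat) : Prop :=
  bne mu' st /\
  forall i th, In th (supp (mu i)) ->
    enorm (fun a => st i th a - s i th a) <= eta.

Definition stable (mu : profile_dist) (s : strat) : Prop :=
  balanced mu s /\
  forall (J : player -> bool) (tt : player -> Theta),
    (exists i, J i = true) ->
    (forall i, J i = true -> ~ In (tt i) (supp (mu i))) ->
    forall eta, 0 < eta ->
    exists etab epsb, 0 <= etab < eta /\ 0 < epsb < 1 /\
      forall eps : player -> R,
        (forall i, J i = true -> 0 < eps i < 1) ->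
        0 < normJ J eps < epsb ->
        (exists st, nearby mu (post J tt eps mu) s etab st) /\
        forall st, nearby mu (post J tt eps mu) s etab st ->
          (exists j, J j = true /\
             forall th, In th (supp (mu j)) ->
               avgfit (post J tt eps mu) st j th > avgfit (post J tt eps mu) st j (tt j))
          \/ balanced (post J tt eps mu) st.

Definition theta0 : Theta := fun r c =>
  match r, c with
  | x1, x1 => 2 | x2, x2 => 2 | x1, x2 => 1 | x2, x1 => 1
  | _, _ => 0
  end.
Definition mu0 : profile_dist := fun _ => [(theta0, 1)].
Definition half_half : mixed := fun a =>
  match a with x1 => 1/2 | x2 => 1/2 | x3 => 0 end.
Definition s0 : strat := fun _ _ => half_half.

From Stdlib Require Import Reals List Lra Psatz Classical ClassicalEpsilon FunctionalExtensionality.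
Open Scope R_scope.

(* The incumbent type only values coordinating on [x1] or [x2]. In an equilibrium close to [s] every
   incumbent still mixes [x1] and [x2], which forces each aggregate to weigh [x1] and [x2] equally and
   keeps incumbents off [x3]. Against such an aggregate a mutant's fitness falls short of the incumbents'
   by its weight on [x3] times [q x1 - 2 q x3 > 0]: either some mutant uses [x3] and is strictly worse,
   or all types are equally fit. A nearby equilibrium exists because mutants can play pure best
   responses while incumbents rebalance [x1]/[x2] to keep the aggregates symmetric; the mutants
   interact only through their weight on [x3], and a strict preference for [x3] at the symmetric
   aggregate survives small entry shares. *)


Definition pure (a : act) : mixed := fun b =>
  match a, b with x1, x1 | x2, x2 | x3, x3 => 1 | _, _ => 0 end.

Lemma pure_mixed a : is_mixed (pure a).
Proof.
  split.
  - intro b; destruct a, b; simpl; lra.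
  - destruct a; unfold sum_act; simpl; lra.
Qed.

Lemma payoff_decomp i u sg q :
  payoff i u sg q = sg x1 * payoff i u (pure x1) q + sg x2 * payoff i u (pure x2) q
                    + sg x3 * payoff i u (pure x3) q.
Proof. destruct i; cbv beta iota delta [payoff U sum_act pure]; ring. Qed.

Lemma payoff_mix_opponent i u sg e p q :
  payoff i u sg (fun a => e * p a + (1 - e) * q a) = e * payoff i u sg p + (1 - e) * payoff i u sg q.
Proof. destruct i; cbv beta iota delta [payoff U sum_act]; ring. Qed.

Lemma pure_best_response i u a q :
  (forall b, payoff i u (pure b) q <= payoff i u (pure a) q) ->
  forall sg, is_mixed sg -> payoff i u sg q <= payoff i u (pure a) q.
Proof.
  intros Hbest sg [Hnn Hsum]. unfold sum_act in Hsum.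
  rewrite (payoff_decomp i u sg).
  pose proof (Hbest x1); pose proof (Hbest x2); pose proof (Hbest x3).
  pose proof (Hnn x1); pose proof (Hnn x2); pose proof (Hnn x3).
  nra.
Qed.

(* The payoff of [s] is the [s]-average of the pure payoffs, none of which exceeds it. *)
Lemma best_response_support i u s q a :
  is_mixed s -> (forall sg, is_mixed sg -> payoff i u sg q <= payoff i u s q) ->
  0 < s a -> payoff i u (pure a) q = payoff i u s q.
Proof.
  intros [Hnn Hsum] Hbest Ha. unfold sum_act in Hsum.
  set (p := fun b => payoff i u (pure b) q).
  set (V := payoff i u s q).
  assert (Hle : forall b, p b <= V) by (intro b; exact (Hbest _ (pure_mixed b))).
  assert (Hzero : s x1 * (V - p x1) + s x2 * (V - p x2) + s x3 * (V - p x3) = 0).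
  { unfold V, p. rewrite (payoff_decomp i u s q) at 1 2 3.
    replace (s x3) with (1 - s x1 - s x2) by lra. ring. }
  assert (Hterm : forall b, 0 <= s b * (V - p b))
    by (intro b; apply Rmult_le_pos; [apply Hnn | pose proof (Hle b); lra]).
  assert (Ha0 : s a * (V - p a) = 0)
    by (pose proof (Hterm x1); pose proof (Hterm x2); pose proof (Hterm x3); destruct a; lra).
  apply Rmult_integral in Ha0 as [Hs | Hp]; [lra | unfold p in Hp; lra].
Qed.

Lemma payoff_theta0 k sg q :
  payoff k theta0 sg q = sg x1 * (2 * q x1 + q x2) + sg x2 * (q x1 + 2 * q x2).
Proof. destruct k; cbv beta iota delta [payoff U sum_act theta0]; ring. Qed.

Lemma theta0_best_response k s q :
  is_mixed s -> s x3 = 0 -> q x1 = q x2 -> 0 <= q x1 ->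
  forall sg, is_mixed sg -> payoff k theta0 sg q <= payoff k theta0 s q.
Proof.
  intros [_ Hs] Hs3 Hq Hq1 sg [Hnn Hsum]. unfold sum_act in Hs, Hsum.
  rewrite !payoff_theta0, <- Hq. pose proof (Hnn x3). nra.
Qed.

(* Indifference between [x1] and [x2] gives [q x1 = q x2]; then [x3] earns [0 < 3 q x1]. *)
Lemma theta0_best_response_inv k s q :
  is_mixed s -> 0 < s x1 -> 0 < s x2 -> 0 < q x1 -> 0 <= q x2 ->
  (forall sg, is_mixed sg -> payoff k theta0 sg q <= payoff k theta0 s q) ->
  q x1 = q x2 /\ s x3 = 0.
Proof.
  intros Hs H1 H2 Hq1 Hq2 Hbest.
  pose proof (best_response_support k theta0 s q x1 Hs Hbest H1) as E1.
  pose proof (best_response_support k theta0 s q x2 Hs Hbest H2) as E2.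
  rewrite !payoff_theta0 in E1, E2. simpl in E1, E2.
  assert (Hq : q x1 = q x2) by lra.
  split; [exact Hq|].
  destruct (proj1 Hs x3) as [H3 | H3]; [|auto].
  pose proof (best_response_support k theta0 s q x3 Hs Hbest H3) as E3.
  rewrite !payoff_theta0 in E3. simpl in E3. lra.
Qed.

Lemma fitness_gap j s m q :
  is_mixed s -> s x3 = 0 -> is_mixed m -> q x1 = q x2 ->
  payoff j (fit j) s q - payoff j (fit j) m q = m x3 * (q x1 - 2 * q x3).
Proof.
  intros [_ Hs] Hs3 [_ Hm] Hq. unfold sum_act in Hs, Hm.
  destruct j; cbv beta iota delta [payoff U sum_act fit pi1 pi2]; rewrite Hs3, <- Hq;
    replace (s x2) with (1 - s x1) by lra; replace (m x2) with (1 - m x1 - m x3) by lra; ring.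
Qed.

Lemma other_involutive i : other (other i) = i.
Proof. destruct i; reflexivity. Qed.

Lemma enorm_coord v a : - enorm v <= v a <= enorm v.
Proof.
  assert (Habs : Rabs (v a) <= enorm v).
  { unfold enorm. rewrite <- sqrt_Rsqr_abs. apply sqrt_le_1_alt.
    unfold Rsqr, sum_act. destruct a; nra. }
  pose proof (Rle_abs (v a)). pose proof (Rle_abs (- v a)). rewrite Rabs_Ropp in *. lra.
Qed.

Lemma enorm_le_of_sq v e : 0 <= e -> sum_act (fun a => v a * v a) <= e * e -> enorm v <= e.
Proof.
  intros He H. unfold enorm. rewrite <- (sqrt_square e He). apply sqrt_le_1_alt. exact H.
Qed.

(* [eps i] is junk when [i] is not in [J]. *)
Definition entry_share (J : player -> bool) (eps : player -> R) (i : player) : R :=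
  if J i then eps i else 0.

Lemma entry_share_bounds J eps i :
  (forall i, J i = true -> 0 < eps i < 1) -> 0 <= entry_share J eps i <= normJ J eps.
Proof.
  intro Heps. unfold normJ, entry_share.
  pose proof (Rmax_l (if J P1 then eps P1 else 0) (if J P2 then eps P2 else 0)).
  pose proof (Rmax_r (if J P1 then eps P1 else 0) (if J P2 then eps P2 else 0)).
  destruct (J P1) eqn:H1, (J P2) eqn:H2;
    try pose proof (Heps P1 H1); try pose proof (Heps P2 H2); destruct i; rewrite ?H1, ?H2; lra.
Qed.

Section PostEntry.
Variables (J : player -> bool) (tt : player -> Theta) (eps : player -> R).
Local Notation E := (entry_share J eps).
Local Notation mu := (post J tt eps mu0).

Lemma dsum_post i f : dsum (mu i) f = E i * f (tt i) + (1 - E i) * f theta0.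
Proof. unfold post, mu0, entry_share, dsum; destruct (J i); simpl; ring. Qed.

Lemma aggr_post st i :
  aggr mu st i = fun a => E i * st i (tt i) a + (1 - E i) * st i theta0 a.
Proof. extensionality a. apply dsum_post. Qed.

Lemma expected_payoff_post st i th sg :
  dsum (mu (other i)) (fun th' => payoff i th sg (st (other i) th'))
  = payoff i th sg (aggr mu st (other i)).
Proof. rewrite dsum_post, aggr_post, payoff_mix_opponent. reflexivity. Qed.

Lemma in_supp_post i th : In th (supp (mu i)) -> (J i = true /\ th = tt i) \/ th = theta0.
Proof. unfold post, mu0, supp; destruct (J i); simpl; intuition. Qed.

Lemma theta0_in_post i : In theta0 (supp (mu i)).
Proof. unfold post, mu0, supp; destruct (J i); simpl; auto. Qed.

Lemma mutant_in_post i : J i = true -> In (tt i) (supp (mu i)).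
Proof. unfold post, mu0, supp; intro Hj; rewrite Hj; simpl; auto. Qed.

End PostEntry.

Definition sym_aggr (c : R) : mixed := fun a => match a with x1 | x2 => c | x3 => 1 - 2 * c end.

Definition mass (e : R) (b : act) : R := (1 - e * pure b x3) / 2.

Lemma mass_bounds e b : 0 <= e -> (1 - e) / 2 <= mass e b <= 1 / 2.
Proof. unfold mass; destruct b; simpl; lra. Qed.

Lemma mass_x3 e : mass e x3 = (1 - e) / 2.
Proof. unfold mass; simpl; field. Qed.

Lemma mass_half e b : e = 0 \/ b <> x3 -> mass e b = 1 / 2.
Proof. unfold mass; intros [-> | Hb]; [|destruct b; try congruence]; simpl; field. Qed.

(* Incumbents shift weight between [x1] and [x2] to cancel the mutant's bias, keeping the aggregate
   symmetric. *)
Definition balance (e : R) (b : act) : mixed := fun a =>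
  match a with
  | x1 => 1 / 2 + e / (2 * (1 - e)) * (pure b x2 - pure b x1)
  | x2 => 1 / 2 + e / (2 * (1 - e)) * (pure b x1 - pure b x2)
  | x3 => 0
  end.

Lemma balance_offset_bounds e : 0 <= e <= 1 / 10 -> 0 <= e / (2 * (1 - e)) <= e.
Proof.
  intro He. set (w := e / (2 * (1 - e))).
  assert (Hw : w * (2 * (1 - e)) = e) by (unfold w; field; lra).
  split; nra.
Qed.

Lemma balance_mixed e b : 0 <= e <= 1 / 10 -> is_mixed (balance e b).
Proof.
  intro He. pose proof (balance_offset_bounds e He).
  split.
  - intro a; destruct a, b; simpl; lra.
  - unfold sum_act, balance; lra.
Qed.

Lemma aggr_balance e b a :
  e < 1 -> e * pure b a + (1 - e) * balance e b a = sym_aggr (mass e b) a.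
Proof. intro He; unfold mass; destruct a, b; simpl; field; lra. Qed.

Lemma balance_near_half e b eta :
  0 <= e <= 1 / 10 -> e <= eta / 2 -> enorm (fun a => balance e b a - half_half a) <= eta.
Proof.
  intros He Heta. pose proof (balance_offset_bounds e He).
  apply enorm_le_of_sq; [lra|].
  set (w := e / (2 * (1 - e))) in *.
  unfold sum_act, balance, half_half; fold w; destruct b; simpl; nra.
Qed.

Definition pure_payoff (i : player) (u : Theta) (c : R) (a : act) : R :=
  payoff i u (pure a) (sym_aggr c).

Definition mutual_best (J : player -> bool) (tt : player -> Theta) (E : player -> R)
    (m : player -> act) : Prop :=
  forall i, J i = true -> forall b,
    let c := mass (E (other i)) (m (other i)) in
    pure_payoff i (tt i) c b <= pure_payoff i (tt i) c (m i).

Definition entry_strat (E : player -> R) (m : player -> act) : strat := fun i th =>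
  if excluded_middle_informative (th = theta0) then balance (E i) (m i) else pure (m i).

Lemma entry_strat_incumbent E m i : entry_strat E m i theta0 = balance (E i) (m i).
Proof. unfold entry_strat. destruct (excluded_middle_informative _); congruence. Qed.

Lemma entry_strat_mutant E m i th : th <> theta0 -> entry_strat E m i th = pure (m i).
Proof. unfold entry_strat. destruct (excluded_middle_informative _); congruence. Qed.

Section EntryEquilibrium.
Variables (J : player -> bool) (tt : player -> Theta) (eps : player -> R) (m : player -> act).
Local Notation E := (entry_share J eps).
Local Notation mu := (post J tt eps mu0).
Local Notation st := (entry_strat E m).

Hypothesis share_small : forall i, 0 <= E i <= 1 / 10.
Hypothesis mutant_fresh : forall i, J i = true -> tt i <> theta0.

Lemma aggr_entry_strat i : aggr mu st i = sym_aggr (mass (E i) (m i)).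
Proof.
  rewrite aggr_post. extensionality a. rewrite entry_strat_incumbent.
  assert (Hmut : E i * st i (tt i) a = E i * pure (m i) a).
  { unfold entry_share. destruct (J i) eqn:Hj; [|ring].
    rewrite entry_strat_mutant by auto. reflexivity. }
  rewrite Hmut. apply aggr_balance. pose proof (share_small i). lra.
Qed.

Hypothesis mutants_best : mutual_best J tt E m.

Lemma bne_entry_strat : bne mu st.
Proof.
  intros i th Hin. split.
  - destruct (in_supp_post _ _ _ _ _ Hin) as [[Hj ->] | ->].
    + rewrite entry_strat_mutant by auto. apply pure_mixed.
    + rewrite entry_strat_incumbent. apply balance_mixed, share_small.
  - intros sg Hsg. rewrite !expected_payoff_post, aggr_entry_strat.
    destruct (in_supp_post _ _ _ _ _ Hin) as [[Hj ->] | ->].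
    + rewrite entry_strat_mutant by auto.
      apply pure_best_response; [|exact Hsg]. exact (mutants_best i Hj).
    + rewrite entry_strat_incumbent.
      pose proof (share_small (other i)).
      pose proof (mass_bounds (E (other i)) (m (other i)) (proj1 (share_small _))).
      apply theta0_best_response; auto; [apply balance_mixed, share_small | unfold sym_aggr; lra].
Qed.

Lemma nearby_entry_strat eta : (forall i, E i <= eta / 2) -> nearby mu0 mu s0 eta st.
Proof.
  intro Heta. split; [exact bne_entry_strat|].
  intros i th Hth. destruct Hth as [<- | []].
  rewrite entry_strat_incumbent. apply balance_near_half; auto.
Qed.

End EntryEquilibrium.

(* Ties are broken away from [x3], so [x3] is chosen only when strictly best. *)
Definition argmax_act (f : act -> R) : act :=
  if Rle_dec (f x3) (Rmax (f x1) (f x2)) then (if Rle_dec (f x2) (f x1) then x1 else x2) else x3.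

Lemma argmax_act_max f a : f a <= f (argmax_act f).
Proof.
  unfold argmax_act, Rmax.
  destruct (Rle_dec (f x1) (f x2)), (Rle_dec _ _), (Rle_dec (f x2) (f x1)); destruct a; lra.
Qed.

Definition prefers_x3 (i : player) (u : Theta) (c : R) : Prop :=
  pure_payoff i u c x1 < pure_payoff i u c x3 /\ pure_payoff i u c x2 < pure_payoff i u c x3.

Lemma argmax_act_x3 i u c : argmax_act (pure_payoff i u c) = x3 -> prefers_x3 i u c.
Proof.
  unfold argmax_act, prefers_x3, Rmax.
  set (f := pure_payoff i u c).
  destruct (Rle_dec (f x1) (f x2)), (Rle_dec _ _), (Rle_dec (f x2) (f x1));
    intro H; try discriminate; lra.
Qed.

Lemma pure_payoff_affine i u c a :
  pure_payoff i u c a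
  = pure_payoff i u (1 / 2) a + (c - 1 / 2) * (pure_payoff i u 1 a - pure_payoff i u 0 a).
Proof.
  unfold pure_payoff; destruct i, a; cbv beta iota delta [payoff U sum_act pure sym_aggr]; field.
Qed.

Lemma affine_pos_near a b : 0 < a -> exists d, 0 < d /\ forall h, - d <= h <= d -> 0 < a + b * h.
Proof.
  intro Ha. pose proof (Rabs_pos b) as Hb.
  exists (a / (2 * (Rabs b + 1))). split; [apply Rdiv_lt_0_compat; lra|].
  intros h Hh. set (d := a / (2 * (Rabs b + 1))) in *.
  assert (Hd : d * (2 * (Rabs b + 1)) = a) by (unfold d; field; lra).
  assert (Hbh : Rabs (b * h) <= Rabs b * d).
  { rewrite Rabs_mult. apply Rmult_le_compat_l; [lra | apply Rabs_le; lra]. }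
  pose proof (Rle_abs (- (b * h))) as Hneg. rewrite Rabs_Ropp in Hneg. nra.
Qed.

(* Pure payoffs are affine in [c], so a strict preference at [c = 1/2] survives nearby. *)
Lemma prefers_x3_near i u :
  exists d, 0 < d /\
    forall c, prefers_x3 i u (1 / 2) -> 1 / 2 - d <= c <= 1 / 2 + d -> prefers_x3 i u c.
Proof.
  destruct (classic (prefers_x3 i u (1 / 2))) as [[H1 H2] | Hno];
    [| exists 1; split; [lra | intros c H; contradiction]].
  set (f := pure_payoff i u).
  set (slope a := f 1 a - f 0 a).
  destruct (affine_pos_near (f (1 / 2) x3 - f (1 / 2) x1) (slope x3 - slope x1))
    as [d1 [Hd1 Hnear1]]; [unfold f; lra|].
  destruct (affine_pos_near (f (1 / 2) x3 - f (1 / 2) x2) (slope x3 - slope x2))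
    as [d2 [Hd2 Hnear2]]; [unfold f; lra|].
  exists (Rmin d1 d2). split; [apply Rmin_glb_lt; auto|].
  intros c _ Hc. pose proof (Rmin_l d1 d2); pose proof (Rmin_r d1 d2).
  assert (Hdiff : forall a, f c x3 - f c a
                  = f (1 / 2) x3 - f (1 / 2) a + (slope x3 - slope a) * (c - 1 / 2))
    by (intro a; unfold slope, f; rewrite (pure_payoff_affine i u c x3), (pure_payoff_affine i u c a);
        ring).
  specialize (Hnear1 (c - 1 / 2) ltac:(lra)); specialize (Hnear2 (c - 1 / 2) ltac:(lra)).
  pose proof (Hdiff x1); pose proof (Hdiff x2). unfold prefers_x3; fold f; lra.
Qed.

Definition assign (i : player) (a b : act) : player -> act := fun k =>
  match i, k with P1, P1 | P2, P2 => a | _, _ => b end.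

Lemma assign_self i a b : assign i a b i = a.
Proof. destruct i; reflexivity. Qed.

Lemma assign_other i a b : assign i a b (other i) = b.
Proof. destruct i; reflexivity. Qed.

Lemma player_cases i k : k = i \/ k = other i.
Proof. destruct i, k; auto. Qed.

(* If some mutant strictly prefers [x3] at the symmetric aggregate, it keeps doing so after the entry
   perturbation and the other mutant simply best-responds to it; otherwise every present mutant avoids
   [x3] and the aggregates stay at [1/2]. *)
Lemma exists_mutual_best J tt E :
  (forall i, 0 <= E i) -> (forall i, J i = false -> E i = 0) ->
  (forall i o c, prefers_x3 i (tt i) (1 / 2) -> (1 - E o) / 2 <= c <= 1 / 2 ->
     prefers_x3 i (tt i) c) ->
  exists m, mutual_best J tt E m.
Proof.
  intros Hnn Hout Hnear.
  destruct (classic (exists i, J i = true /\ prefers_x3 i (tt i) (1 / 2)))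
    as [[i [Hi Hx3]] | Hnone].
  - set (bo := argmax_act (pure_payoff (other i) (tt (other i)) ((1 - E i) / 2))).
    exists (assign i x3 bo).
    intros k Hk b; cbv zeta. destruct (player_cases i k) as [-> | ->].
    + rewrite assign_self, assign_other.
      destruct (Hnear i (other i) _ Hx3 (mass_bounds _ bo (Hnn _))). destruct b; lra.
    + rewrite other_involutive, assign_self, assign_other, mass_x3. apply argmax_act_max.
  - exists (fun k => argmax_act (pure_payoff k (tt k) (1 / 2))).
    intros k Hk b; cbv zeta. rewrite mass_half; [apply argmax_act_max|].
    destruct (J (other k)) eqn:Ho; [right | left; auto].
    intro Hx. apply Hnone. exists (other k). split; [exact Ho | apply argmax_act_x3, Hx].
Qed.

Section NearbyEquilibrium.
Variables (J : player -> bool) (tt : player -> Theta) (eps : player -> R) (eta : R) (st : strat).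
Local Notation E := (entry_share J eps).
Local Notation mu := (post J tt eps mu0).
Local Notation q := (aggr mu st).

Hypothesis share_small : forall i, 0 <= E i <= 1 / 10.
Hypothesis eta_small : eta <= 1 / 4.
Hypothesis st_nearby : nearby mu0 mu s0 eta st.

Lemma incumbent_interior k :
  is_mixed (st k theta0) /\ 1 / 4 <= st k theta0 x1 /\ 1 / 4 <= st k theta0 x2.
Proof.
  destruct st_nearby as [Hbne Hclose].
  pose proof (Hclose k theta0 (or_introl eq_refl)) as Hd.
  pose proof (enorm_coord (fun a => st k theta0 a - s0 k theta0 a) x1).
  pose proof (enorm_coord (fun a => st k theta0 a - s0 k theta0 a) x2).
  simpl in *. repeat split; [apply (Hbne k theta0 (theta0_in_post J tt eps k)) ..| lra | lra].
Qed.

Lemma mutant_weight k a : 0 <= E k * st k (tt k) a <= E k.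
Proof.
  pose proof (share_small k). unfold entry_share in *. destruct (J k) eqn:Hj; [|lra].
  destruct (proj1 st_nearby k (tt k) (mutant_in_post J tt eps k Hj)) as [[Hnn Hsum] _].
  unfold sum_act in Hsum. pose proof (Hnn x1); pose proof (Hnn x2); pose proof (Hnn x3).
  destruct a; nra.
Qed.

Lemma aggr_mixed k : is_mixed (q k).
Proof.
  destruct (incumbent_interior k) as [[Hnn Hsum] _]. unfold sum_act in Hsum.
  pose proof (share_small k).
  assert (Hmut_sum : E k * (st k (tt k) x1 + st k (tt k) x2 + st k (tt k) x3) = E k).
  { unfold entry_share in *. destruct (J k) eqn:Hj; [|ring].
    destruct (proj1 st_nearby k (tt k) (mutant_in_post J tt eps k Hj)) as [[_ Hs] _].
    unfold sum_act in Hs. rewrite Hs. ring. }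
  rewrite aggr_post. split.
  - intro a. pose proof (mutant_weight k a). pose proof (Hnn a). nra.
  - unfold sum_act. nra.
Qed.

Lemma incumbent_indifference k : q (other k) x1 = q (other k) x2 /\ st k theta0 x3 = 0.
Proof.
  destruct (incumbent_interior k) as [Hmix [H1 H2]].
  pose proof (share_small (other k)).
  pose proof (mutant_weight (other k) x1). pose proof (mutant_weight (other k) x2).
  destruct (incumbent_interior (other k)) as [[Hnn _] [H1' _]]. pose proof (Hnn x2).
  apply (theta0_best_response_inv k); [exact Hmix | lra | lra | rewrite aggr_post; nra
                                      | rewrite aggr_post; nra |].
  intros sg Hsg. rewrite <- !expected_payoff_post.
  apply (proj1 st_nearby k theta0 (theta0_in_post J tt eps k)), Hsg.
Qed.

(* [q x1 - 2 q x3] is the fitness a mutant loses per unit of weight on [x3] (see [fitness_gap]). *)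
Lemma aggr_gap k : 0 < q k x1 - 2 * q k x3.
Proof.
  destruct (aggr_mixed k) as [_ Hsum]. unfold sum_act in Hsum.
  destruct (incumbent_indifference (other k)) as [Hq _]. rewrite other_involutive in Hq.
  destruct (incumbent_indifference k) as [_ H3].
  pose proof (mutant_weight k x3). pose proof (share_small k).
  assert (Hq3 : q k x3 <= 1 / 10) by (rewrite aggr_post, H3; lra).
  lra.
Qed.

Lemma avgfit_gap j : J j = true ->
  avgfit mu st j theta0 - avgfit mu st j (tt j)
  = st j (tt j) x3 * (q (other j) x1 - 2 * q (other j) x3).
Proof.
  intro Hj. unfold avgfit. apply fitness_gap.
  - apply incumbent_interior.
  - apply incumbent_indifference.
  - exact (proj1 (proj1 st_nearby j (tt j) (mutant_in_post J tt eps j Hj))).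
  - apply incumbent_indifference.
Qed.

Lemma nearby_dichotomy :
  (exists j, J j = true /\
     forall th, In th (supp (mu0 j)) -> avgfit mu st j th > avgfit mu st j (tt j))
  \/ balanced mu st.
Proof.
  destruct (classic (exists j, J j = true /\ 0 < st j (tt j) x3)) as [[j [Hj Hpos]] | Hno].
  - left. exists j. split; [exact Hj|]. intros th [<- | []].
    pose proof (avgfit_gap j Hj). pose proof (aggr_gap (other j)).
    assert (0 < st j (tt j) x3 * (q (other j) x1 - 2 * q (other j) x3)) by nra.
    simpl. lra.
  - right.
    assert (Hall : forall i th, In th (supp (mu i)) -> avgfit mu st i th = avgfit mu st i theta0).
    { intros i th Hth. destruct (in_supp_post J tt eps i th Hth) as [[Hj ->] | ->]; [|reflexivity].
      assert (Hx3 : st i (tt i) x3 = 0).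
      { destruct (proj1 (proj1 (proj1 st_nearby i (tt i) (mutant_in_post J tt eps i Hj))) x3)
          as [Hlt | Heq]; [exfalso; apply Hno; eauto | auto]. }
      pose proof (avgfit_gap i Hj) as Hgap. rewrite Hx3 in Hgap. lra. }
    intros i th th' H H'. rewrite (Hall i th H), (Hall i th' H'). reflexivity.
Qed.

End NearbyEquilibrium.

Lemma half_half_mixed : is_mixed half_half.
Proof. split; [intro a; destruct a; simpl; lra | unfold sum_act; simpl; lra]. Qed.

Lemma bne_mu0_s0 : bne mu0 s0.
Proof.
  intros i th [<- | []]. split; [exact half_half_mixed|].
  intros sg Hsg. unfold dsum; simpl. rewrite !Rmult_1_l, !Rplus_0_r.
  apply theta0_best_response; auto; [exact half_half_mixed | simpl; lra ..].
Qed.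

Lemma balanced_mu0_s0 : balanced mu0 s0.
Proof. intros i th th' [<- | []] [<- | []]; reflexivity. Qed.

Theorem mainTheorem13 : bne mu0 s0 /\ stable mu0 s0.
Proof.
  split; [exact bne_mu0_s0 | split; [exact balanced_mu0_s0 |]].
  intros J tt _ Hfresh eta Heta.
  destruct (prefers_x3_near P1 (tt P1)) as [d1 [Hd1 Hnear1]].
  destruct (prefers_x3_near P2 (tt P2)) as [d2 [Hd2 Hnear2]].
  set (etab := Rmin (eta / 2) (1 / 4)).
  set (epsb := Rmin (Rmin (1 / 10) (etab / 2)) (Rmin d1 d2)).
  assert (Hetab : 0 < etab <= eta / 2 /\ etab <= 1 / 4)
    by (unfold etab; split; [split; [apply Rmin_glb_lt|apply Rmin_l] | apply Rmin_r]; lra).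
  assert (Hepsb : 0 < epsb /\ epsb <= 1 / 10 /\ epsb <= etab / 2 /\ epsb <= d1 /\ epsb <= d2).
  { unfold epsb. pose proof (Rmin_l (Rmin (1 / 10) (etab / 2)) (Rmin d1 d2)).
    pose proof (Rmin_r (Rmin (1 / 10) (etab / 2)) (Rmin d1 d2)).
    pose proof (Rmin_l (1 / 10) (etab / 2)); pose proof (Rmin_r (1 / 10) (etab / 2)).
    pose proof (Rmin_l d1 d2); pose proof (Rmin_r d1 d2).
    split; [repeat apply Rmin_glb_lt; lra | lra]. }
  exists etab, epsb. split; [lra | split; [lra |]].
  intros eps Heps Hnorm.
  assert (HE : forall i, 0 <= entry_share J eps i <= epsb)
    by (intro i; pose proof (entry_share_bounds J eps i Heps); lra).
  assert (Htt : forall i, J i = true -> tt i <> theta0)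
    by (intros i Hi Heq; apply (Hfresh i Hi); rewrite Heq; left; reflexivity).
  split.
  - destruct (exists_mutual_best J tt (entry_share J eps)) as [m Hm].
    + intro i; apply HE.
    + intros i Hi; unfold entry_share; rewrite Hi; reflexivity.
    + intros [|] o c Hx3 Hc; [apply Hnear1 | apply Hnear2]; auto; pose proof (HE o); lra.
    + exists (entry_strat (entry_share J eps) m).
      apply nearby_entry_strat; auto; intro i; pose proof (HE i); lra.
  - intros st Hst. apply (nearby_dichotomy J tt eps etab); auto; [intro i; pose proof (HE i) |]; lra.
Qed.
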